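(* Let $(V_{1},V_{2})$ be a pair of commuting isometries on a Hilbert space $\mathcal{H}$ with defect zero, i.e. $C(V_1,V_2)=0$. Let $(\mathcal{E},P,U)$ be the BCL triple for $(V_{1},V_{2})$. Let $\mathcal{E}_1= \operatorname{ran} P$ and $\mathcal{E}_2 = \operatorname{ran} P^\perp $. Then $\mathcal{E}_1,\mathcal{E}_2$ are reducing subspaces for $U$, i.e., $$\mathcal{E}=\mathcal{E}_1\oplus\mathcal{E}_2, \ U=\begin{pmatrix} U_1 & 0 \\ 0 & U_2 \end{pmatrix} \text{ and } P=\begin{pmatrix} I_{\mathcal{E}_1} & 0 \\ 0 & 0 \end{pmatrix}\text{ in } \mathcal{B}(\mathcal{E}_1\oplus \mathcal{E}_2)$$ for some unitaries $U_1$ and $U_2$ on $\mathcal{E}_1$ and $\mathcal{E}_2$ respectively. Also $\mathcal{H}=(H^2_{\mathbb{D}}\otimes \mathcal{E}_1) \oplus (H^2_{\mathbb{D}}\otimes \mathcal{E}_2) \oplus \mathcal{K}$ and in this decomposition, $$V_1= \begin{pmatrix} M_z\otimes I_{\mathcal{E}_1}& 0&0\\ 0& I_{H^2_{\mathbb{D}}}\otimes U_2^* & 0\\ 0&0&W_1 \end{pmatrix}, \quad V_2= \begin{pmatrix} I_{H^2_{\mathbb{D}}}\otimes U_1 & 0&0\\ 0& M_z\otimes I_{\mathcal{E}_2} & 0\\ 0&0&W_2 \end{pmatrix},$$ up to unitary equivalence, for some unitary $U_i$ on $\mathcal{E}_i, i=1,2$ and commuting unitaries $W_1, W_2$ on 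$\mathcal{K}$.
   Context: For commuting isometries $V_1,V_2$ on $\mathcal{H}$, the defect operator is $C(V_1,V_2)=I-V_1V_1^*-V_2V_2^*+V_1V_2V_2^*V_1^*$. $H^2_{\mathbb{D}}$ is the Hardy space of scalar-valued functions on the unit disc $\mathbb{D}$, $M_z$ is multiplication by the coordinate function $z$ on it, and $H^2_{\mathbb{D}}(\mathcal{E})$ is identified with $H^2_{\mathbb{D}}\otimes\mathcal{E}$. By the Berger–Coburn–Lebow theorem, up to unitary equivalence $\mathcal{H}=\mathcal{H}_p\oplus\mathcal{H}_u$ with both summands reducing, where there is a unique (up to unitary equivalence) triple $(\mathcal{E},P,U)$ consisting of a Hilbert space $\mathcal{E}$ (namely $\ker (V_1V_2)^*$), a projection $P$ on $\mathcal{E}$ and a unitary $U$ on $\mathcal{E}$, such that $\mathcal{H}_p=H^2_{\mathbb{D}}(\mathcal{E})$ and $(V_1|_{\mathcal{H}_p},V_2|_{\mathcal{H}_p})=(M_{\varphi_1},M_{\varphi_2})$ with $\varphi_1(z)=U^*(P^\perp+zP)$, $\varphi_2(z)=(P+zP^\perp)U$, while $V_1|_{\mathcal{H}_u},V_2|_{\mathcal{H}_u}$ are commuting unitaries. This triple $(\mathcal{E},P,U)$ is called the BCL triple for $(V_1,V_2)$. *)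

From mathcomp Require Import all_boot all_order all_algebra.
From mathcomp Require Import reals.
From mathcomp.real_closed Require Import complex.
Import Order.TTheory GRing.Theory Num.Theory.

Set Implicit Arguments.
Unset Strict Implicit.
Unset Printing Implicit Defensive.

Local Open Scope ring_scope.

Record hilbertSpace (R : realType) := HilbertSpace {
  hs_car :> lmodType R[i];
  hs_ip : hs_car -> hs_car -> R[i];
  hs_ip_linl : forall (a : R[i]) (x y z : hs_car),
      hs_ip (a *: x + y) z = a * hs_ip x z + hs_ip y z;
  hs_ip_conj : forall x y : hs_car, hs_ip y x = (hs_ip x y)^*;
  hs_ip_ge0 : forall x : hs_car, 0 <= hs_ip x x;
  hs_ip_eq0 : forall x : hs_car, hs_ip x x = 0 -> x = 0;
  hs_complete : forall u : nat -> hs_car,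
      (forall e : R[i], 0 < e -> exists N : nat, forall m n : nat,
          (N <= m)%N -> (N <= n)%N -> hs_ip (u m - u n) (u m - u n) < e) ->
      exists l : hs_car, forall e : R[i], 0 < e -> exists N : nat,
          forall n : nat, (N <= n)%N -> hs_ip (u n - l) (u n - l) < e
}.

Arguments hs_ip {R h}.
Notation "<< x , y >>" := (hs_ip x y) (format "<< x ,  y >>").

Section Operators.
Variable R : realType.

Definition hs_linear (H1 H2 : hilbertSpace R) (f : H1 -> H2) : Prop :=
  forall (a : R[i]) (x y : H1), f (a *: x + y) = a *: f x + f y.

Definition hs_adjoint (H1 H2 : hilbertSpace R) (T : H1 -> H2) (S : H2 -> H1) :=
  forall (x : H1) (y : H2), << T x, y >> = << x, S y >>.

Definition hs_isometry (H : hilbertSpace R) (V Vs : H -> H) : Prop :=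
  [/\ hs_linear V, hs_adjoint V Vs & forall x, Vs (V x) = x].

Definition hs_unitary (H1 H2 : hilbertSpace R) (U : H1 -> H2) (Us : H2 -> H1) :=
  [/\ hs_linear U, hs_adjoint U Us, (forall x, Us (U x) = x)
    & forall y, U (Us y) = y].

Definition hs_projection (H : hilbertSpace R) (P : H -> H) : Prop :=
  [/\ hs_linear P, hs_adjoint P P & forall x, P (P x) = P x].

Definition commute_op (H : hilbertSpace R) (T S : H -> H) : Prop :=
  forall x, T (S x) = S (T x).

Definition defect_zero (H : hilbertSpace R) (V1 V1s V2 V2s : H -> H) : Prop :=
  forall x, x - V1 (V1s x) - V2 (V2s x) + V1 (V2 (V2s (V1s x))) = 0.

Definition ran (H : hilbertSpace R) (T : H -> H) (x : H) : Prop :=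
  exists y, T y = x.
Definition perp (H : hilbertSpace R) (P : H -> H) : H -> H := fun x => x - P x.

Definition reducing (H : hilbertSpace R) (T Ts : H -> H) (M : H -> Prop) :=
  forall x, M x -> M (T x) /\ M (Ts x).

Definition series_to (f : nat -> R[i]) (l : R[i]) : Prop :=
  forall e : R[i], 0 < e -> exists N : nat, forall n : nat, (N <= n)%N ->
    `| \sum_(k < n) f k - l | < e.

(* H^2_D(E) = H^2_D (x) E is identified with the space of square-summable
   sequences of Taylor coefficients a : nat -> E  (f(z) = sum_n a_n z^n),
   with <f, g> = sum_n <a_n, b_n>. *)
Definition sq_summable (E : hilbertSpace R) (a : nat -> E) : Prop :=
  exists l, series_to (fun n => << a n, a n >>) l.

(* M_z (x) I_E : the shift on coefficient sequences *)
Definition shift (E : hilbertSpace R) (a : nat -> E) : nat -> E :=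
  fun n => match n with 0 => 0 | m.+1 => a m end.

(* M_{phi1} with phi1(z) = U^*(P^perp + z P) *)
Definition Mphi1 (E : hilbertSpace R) (P Us : E -> E) (a : nat -> E) : nat -> E :=
  fun n => Us (perp P (a n) + P (shift a n)).

(* M_{phi2} with phi2(z) = (P + z P^perp) U *)
Definition Mphi2 (E : hilbertSpace R) (P U : E -> E) (a : nat -> E) : nat -> E :=
  fun n => P (U (a n)) + perp P (U (shift a n)).

Definition is_BCL_triple (H : hilbertSpace R) (V1 V2 : H -> H)
    (E : hilbertSpace R) (P U Us : E -> E) : Prop :=
  [/\ hs_projection P, hs_unitary U Us &
  exists (Hu : hilbertSpace R) (Wu1 Wu1s Wu2 Wu2s : Hu -> Hu)
         (Phi : H -> (nat -> E) * Hu),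
    [/\ hs_unitary Wu1 Wu1s, hs_unitary Wu2 Wu2s, commute_op Wu1 Wu2 &
    (forall (c : R[i]) (x y : H),
        (forall n, (Phi (c *: x + y)).1 n = c *: (Phi x).1 n + (Phi y).1 n)
        /\ (Phi (c *: x + y)).2 = c *: (Phi x).2 + (Phi y).2) /\
    (* Phi preserves inner products *)
    (forall x y : H, series_to (fun n => << (Phi x).1 n, (Phi y).1 n >>)
                               (<< x, y >> - << (Phi x).2, (Phi y).2 >>)) /\
    (forall (a : nat -> E) (k : Hu), sq_summable a ->
        exists x : H, (forall n, (Phi x).1 n = a n) /\ (Phi x).2 = k) /\
    (forall x : H,
        (forall n, (Phi (V1 x)).1 n = Mphi1 P Us (Phi x).1 n) /\
        (Phi (V1 x)).2 = Wu1 (Phi x).2 /\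
        (forall n, (Phi (V2 x)).1 n = Mphi2 P U (Phi x).1 n) /\
        (Phi (V2 x)).2 = Wu2 (Phi x).2)]].

End Operators.

From mathcomp Require Import all_boot all_order all_algebra.
From mathcomp Require Import classical_sets reals.
From mathcomp.real_closed Require Import complex.
From mathcomp Require Import ring.
Import Order.TTheory GRing.Theory Num.Theory.

Set Implicit Arguments.
Unset Strict Implicit.
Unset Printing Implicit Defensive.

Local Open Scope ring_scope.

(* In the BCL model, V1^* maps the constant function e of H^2(E) to the
   constant P^perp U e and V2^* maps it to the constant U^* P e, so the defect
   operator maps it to the constant U^* P U e - P e.  Defect zero thus forces
   P U = U P.  Once U commutes with P, the unitary
   (a_n)_n |-> ((U^n P a_n)_n, (U^*^n P^perp a_n)_n)
   from H^2(E) onto H^2(E1) (+) H^2(E2) turns M_phi1 into M_z (+) U^* and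
   M_phi2 into U (+) M_z. *)

Section Series.
Variable R : realType.
Implicit Types (f g : nat -> R[i]) (l : R[i]).

Lemma series_to_unique f l1 l2 : series_to f l1 -> series_to f l2 -> l1 = l2.
Proof.
move=> h1 h2; apply/eqP; apply/negPn/negP => hne.
have e0 : 0 < `|l1 - l2| / 2 by rewrite divr_gt0 // normr_gt0 subr_eq0.
have [N1 HN1] := h1 _ e0; have [N2 HN2] := h2 _ e0.
have := HN1 _ (leq_maxl N1 N2); have := HN2 _ (leq_maxr N1 N2).
set S := \sum_(k < _) f k => d2 d1.
have : `|l1 - l2| < `|l1 - l2| / 2 + `|l1 - l2| / 2.
  apply: le_lt_trans (ltrD d1 d2).
  by rewrite -(normrN (S - l1)) (_ : l1 - l2 = - (S - l1) + (S - l2)) ?ler_normD //; ring.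
by rewrite -splitr ltxx.
Qed.

Lemma eq_series_to f g l : f =1 g -> series_to f l -> series_to g l.
Proof.
by move=> fg h e /h[N HN]; exists N => n /HN; under eq_bigr do rewrite fg.
Qed.

Lemma series_toD f g a b : series_to f a -> series_to g b ->
  series_to (fun n => f n + g n) (a + b).
Proof.
move=> ha hb e e0.
have e2 : 0 < e / 2 by rewrite divr_gt0.
have [N1 H1] := ha _ e2; have [N2 H2] := hb _ e2.
exists (maxn N1 N2) => n; rewrite geq_max => /andP[n1 n2].
rewrite big_split /= opprD addrACA (splitr e).
by apply: le_lt_trans (ler_normD _ _) _; rewrite ltrD ?H1 ?H2.
Qed.

Lemma series_toN f l : series_to f l -> series_to (fun n => - f n) (- l).
Proof. by move=> h e /h[N HN]; exists N => n /HN; rewrite sumrN -opprD normrN. Qed.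

Lemma series_toB f g a b : series_to f a -> series_to g b ->
  series_to (fun n => f n - g n) (a - b).
Proof. by move=> ha hb; apply: series_toD ha (series_toN hb). Qed.

Lemma series_to_first f : (forall n, (0 < n)%N -> f n = 0) -> series_to f (f 0%N).
Proof.
move=> hf e e0; exists 1%N => -[//|n] _.
by rewrite big_ord_recl big1 ?addr0 ?subrr ?normr0 // => k _; apply: hf.
Qed.

Lemma series_to_firstE f l :
  (forall n, (0 < n)%N -> f n = 0) -> series_to f l -> l = f 0%N.
Proof. by move=> hf /series_to_unique; apply; apply: series_to_first. Qed.

Lemma nondecreasing_sup_cvg (u : nat -> R) M :
  {homo u : m n / (m <= n)%N >-> m <= n} -> (forall n, u n <= M) ->
  forall e, 0 < e -> exists N, forall n, (N <= n)%N -> `|u n - sup (range u)| < e.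
Proof.
move=> u_homo uM e e0.
have hu : has_sup (range u) by split; [exists (u 0%N), 0%N | exists M => _ [n _ <-]].
have [_ [N _ <-] hN] := sup_adherent e0 hu.
exists N => n Nn; have un : u n <= sup (range u) by apply: sup_upper_bound => //; exists n.
rewrite ler0_norm ?subr_le0 // opprB ltrBlDr -ltrBlDl.
exact: lt_le_trans hN (u_homo _ _ Nn).
Qed.

Local Open Scope complex_scope.

Lemma normC_real (x : R) : `|x%:C| = `|x|%:C.
Proof. by rewrite normc_def /= expr0n addr0 sqrtr_sqr. Qed.

Lemma Re_gt0 (z : R[i]) : 0 < z -> 0 < complex.Re z.
Proof. by rewrite ltcE => /andP[]. Qed.

Lemma series_to_comparison f g l : (forall n, 0 <= g n <= f n) -> series_to f l ->
  exists l', series_to g l'.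
Proof.
move=> gf hf.
have g0 k : 0 <= g k by case/andP: (gf k).
have f0 k : 0 <= f k by case/andP: (gf k); apply: le_trans.
have sum_homo (h : nat -> R[i]) m n : (forall k, 0 <= h k) -> (m <= n)%N ->
    \sum_(k < m) h k <= \sum_(k < n) h k.
  by move=> h0 mn; rewrite -(subnKC mn) big_split_ord /= lerDl sumr_ge0.
pose u n := complex.Re (\sum_(k < n) g k).
have sum_g n : \sum_(k < n) g k = (u n)%:C.
  by rewrite RRe_real // ger0_real // sumr_ge0.
have u_homo : {homo u : m n / (m <= n)%N >-> m <= n}.
  by move=> m n /(sum_homo _ _ _ g0); rewrite lecE => /andP[].
have [N HN] := hf 1 ltr01.
have u_bound n : u n <= complex.Re l + 1.
  have : \sum_(k < n) g k <= \sum_(k < maxn n N) f k.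
    apply: le_trans (sum_homo _ _ _ f0 (leq_maxl n N)).
    by apply: ler_sum => k _; case/andP: (gf k).
  rewrite lecE => /andP[_ /le_trans]; apply; rewrite -lerBlDl -raddfB /=.
  apply: le_trans (ler_norm _) _; apply: ltW; rewrite -ltcR.
  exact: le_lt_trans (normc_ge_Re _) (HN _ (leq_maxr n N)).
exists (sup (range u))%:C => e e0.
have [N' HN'] := nondecreasing_sup_cvg u_homo u_bound (Re_gt0 e0).
exists N' => n /HN'; rewrite sum_g -raddfB normC_real -ltcR.
by rewrite RRe_real // gtr0_real.
Qed.

End Series.

Section InnerProduct.
Variables (R : realType) (H : hilbertSpace R).
Implicit Types x y z : H.

Lemma ip0l z : << 0 : H, z >> = 0.
Proof.
have := hs_ip_linl 1 (0 : H) 0 z; rewrite scaler0 addr0 mul1r => h.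
by apply: (@addrI _ << 0 : H, z >>); rewrite addr0 -h.
Qed.

Lemma ipDl x y z : << x + y, z >> = << x, z >> + << y, z >>.
Proof. by rewrite -{1}(scale1r x) hs_ip_linl mul1r. Qed.

Lemma ip0r z : << z, 0 : H >> = 0.
Proof. by rewrite hs_ip_conj ip0l conjC0. Qed.

Lemma ipDr x y z : << z, x + y >> = << z, x >> + << z, y >>.
Proof. by rewrite hs_ip_conj ipDl raddfD /= -!hs_ip_conj. Qed.

Lemma ipNr y z : << z, - y >> = - << z, y >>.
Proof. by apply/eqP; rewrite -addr_eq0 -ipDr addNr ip0r. Qed.

Lemma ipBr x y z : << z, x - y >> = << z, x >> - << z, y >>.
Proof. by rewrite ipDr ipNr. Qed.

Lemma ipr_inj x y : (forall u, << u, x >> = << u, y >>) -> x = y.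
Proof.
move=> h; apply/eqP; rewrite -subr_eq0; apply/eqP/hs_ip_eq0.
by rewrite ipBr h subrr.
Qed.

End InnerProduct.

Section Linear.
Variables (R : realType) (H1 H2 : hilbertSpace R) (f : H1 -> H2).
Hypothesis hf : hs_linear f.

Lemma lin0 : f 0 = 0.
Proof.
have := hf 1 0 0; rewrite scaler0 addr0 scale1r => h.
by apply: (@addrI _ (f 0)); rewrite addr0 -h.
Qed.

Lemma linD x y : f (x + y) = f x + f y.
Proof. by rewrite -{1}(scale1r x) hf scale1r. Qed.

Lemma linB x y : f (x - y) = f x - f y.
Proof. by apply/eqP; rewrite eq_sym subr_eq -linD subrK. Qed.

End Linear.

Lemma isometry_adjoint_decomp (R : realType) (H : hilbertSpace R) (V Vs : H -> H) :
  hs_isometry V Vs ->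
  forall x z w, x = V z + w -> (forall u, << V u, w >> = 0) -> Vs x = z.
Proof.
case=> _ hadj hK x z w -> hw; apply: ipr_inj => u.
by rewrite -hadj ipDr hw addr0 hadj hK.
Qed.

Section Projection.
Variables (R : realType) (E : hilbertSpace R) (P : E -> E).
Hypothesis hP : hs_projection P.
Implicit Types x y z : E.

Lemma proj_linear : hs_linear P. Proof. by case: hP. Qed.
Lemma proj_selfadjoint : hs_adjoint P P. Proof. by case: hP. Qed.
Lemma proj_idem x : P (P x) = P x. Proof. by case: hP. Qed.

Lemma perp_linear : hs_linear (perp P).
Proof. by move=> a x y; rewrite /perp proj_linear scalerBr opprD addrACA. Qed.

Lemma proj_perp x : P (perp P x) = 0.
Proof. by rewrite /perp (linB proj_linear) proj_idem subrr. Qed.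

Lemma perp_proj x : perp P (P x) = 0.
Proof. by rewrite /perp proj_idem subrr. Qed.

Lemma perp_idem x : perp P (perp P x) = perp P x.
Proof. by rewrite {1}/perp proj_perp subr0. Qed.

Lemma proj_add_perp x : P x + perp P x = x.
Proof. by rewrite /perp addrC subrK. Qed.

Lemma proj_ran z : ran P z -> P z = z.
Proof. by case=> y <-; rewrite proj_idem. Qed.

Lemma proj_ran_perp z : ran (perp P) z -> P z = 0.
Proof. by case=> y <-; rewrite proj_perp. Qed.

Lemma perp_ran z : ran P z -> perp P z = 0.
Proof. by case=> y <-; rewrite perp_proj. Qed.

Lemma perp_ran_perp z : ran (perp P) z -> perp P z = z.
Proof. by case=> y <-; rewrite perp_idem. Qed.

Lemma ip_proj_perp x y : << P x, perp P y >> = 0.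
Proof. by rewrite proj_selfadjoint proj_perp ip0r. Qed.

Lemma ip_perp_proj x y : << perp P x, P y >> = 0.
Proof. by rewrite hs_ip_conj ip_proj_perp conjC0. Qed.

Lemma ip_projr x y : << P x, y >> = << P x, P y >>.
Proof. by rewrite -{1}(proj_add_perp y) ipDr ip_proj_perp addr0. Qed.

Lemma ip_proj_split x y : << x, y >> = << P x, P y >> + << perp P x, perp P y >>.
Proof.
rewrite -{1}(proj_add_perp x) -{1}(proj_add_perp y) (ipDl (P x)) !(ipDr (P y)).
by rewrite ip_proj_perp ip_perp_proj addr0 add0r.
Qed.

Lemma ip_proj_le x : << P x, P x >> <= << x, x >>.
Proof. by rewrite [X in _ <= X]ip_proj_split lerDl hs_ip_ge0. Qed.

End Projection.

Section Unitary.
Variables (R : realType) (E : hilbertSpace R) (U Us : E -> E).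
Hypothesis hU : hs_unitary U Us.
Implicit Types x y : E.

Lemma unitary_linear : hs_linear U. Proof. by case: hU. Qed.
Lemma unitary_adjoint : hs_adjoint U Us. Proof. by case: hU. Qed.
Lemma unitaryK : cancel U Us. Proof. by case: hU. Qed.
Lemma unitaryKV : cancel Us U. Proof. by case: hU. Qed.

Lemma unitary_adj_linear : hs_linear Us.
Proof.
move=> a x y; rewrite -{1}(unitaryKV x) -{1}(unitaryKV y).
by rewrite -unitary_linear unitaryK.
Qed.

Lemma unitary_ip x y : << U x, U y >> = << x, y >>.
Proof. by rewrite unitary_adjoint unitaryK. Qed.

Lemma unitary_adj_ip x y : << Us x, Us y >> = << x, y >>.
Proof. by rewrite -unitary_adjoint unitaryKV. Qed.

End Unitary.

Lemma iter_commute (T : Type) (f g : T -> T) :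
  (forall x, f (g x) = g (f x)) -> forall n x, f (iter n g x) = iter n g (f x).
Proof. by move=> fg n x; elim: n => //= n IH; rewrite fg IH. Qed.

Lemma iterK (T : Type) (f g : T -> T) n : cancel f g -> cancel (iter n f) (iter n g).
Proof. by move=> fK; elim: n => // n IH x; rewrite iterSr iterS fK IH. Qed.

Lemma iter_linear (R : realType) (E : hilbertSpace R) (f : E -> E) n :
  hs_linear f -> hs_linear (iter n f).
Proof. by move=> hf; elim: n => [|n IH] a x y //=; rewrite IH hf. Qed.

Lemma iter_ip (R : realType) (E : hilbertSpace R) (f : E -> E) n x y :
  (forall a b, << f a, f b >> = << a, b >>) -> << iter n f x, iter n f y >> = << x, y >>.
Proof. by move=> hf; elim: n => //= n IH; rewrite hf. Qed.

Section CommutingSplit.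
Variables (R : realType) (E : hilbertSpace R) (P U Us : E -> E).
Hypotheses (hP : hs_projection P) (hU : hs_unitary U Us).
Hypothesis PU : forall e, P (U e) = U (P e).

Lemma PUs e : P (Us e) = Us (P e).
Proof. by rewrite -{2}(unitaryKV hU e) PU (unitaryK hU). Qed.

Lemma perpU e : perp P (U e) = U (perp P e).
Proof. by rewrite /perp (linB (unitary_linear hU)) PU. Qed.

Lemma perpUs e : perp P (Us e) = Us (perp P e).
Proof. by rewrite /perp (linB (unitary_adj_linear hU)) PUs. Qed.

Lemma commute_reducing_ran : reducing U Us (ran P) /\ reducing U Us (ran (perp P)).
Proof.
rewrite /reducing /ran; split=> x [e <-]; split.
- by exists (U e); rewrite PU.
- by exists (Us e); rewrite PUs.
- by exists (U e); rewrite perpU.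
- by exists (Us e); rewrite perpUs.
Qed.

Definition toE1 (a : nat -> E) n := iter n U (P (a n)).
Definition toE2 (a : nat -> E) n := iter n Us (perp P (a n)).
Definition ofE12 (a1 a2 : nat -> E) n := iter n Us (a1 n) + iter n U (a2 n).

Lemma toE1_ran a n : ran P (toE1 a n).
Proof. by exists (iter n U (a n)); rewrite (iter_commute PU). Qed.

Lemma toE2_ran a n : ran (perp P) (toE2 a n).
Proof. by exists (iter n Us (a n)); rewrite (iter_commute perpUs). Qed.

Lemma ip_toE1 a b n : << toE1 a n, toE1 b n >> = << P (a n), P (b n) >>.
Proof. exact: iter_ip (unitary_ip hU). Qed.

Lemma ip_toE12 a b n : << a n, b n >> = << toE1 a n, toE1 b n >> + << toE2 a n, toE2 b n >>.
Proof. by rewrite ip_toE1 (iter_ip _ _ _ (unitary_adj_ip hU)) -ip_proj_split. Qed.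

Section OfE12.
Variables a1 a2 : nat -> E.
Hypotheses (a1P : forall n, ran P (a1 n)) (a2P : forall n, ran (perp P) (a2 n)).

Lemma toE1_ofE12 n : toE1 (ofE12 a1 a2) n = a1 n.
Proof.
rewrite /toE1 /ofE12 (linD (proj_linear hP)) (iter_commute PUs) (iter_commute PU).
rewrite (proj_ran hP (a1P n)) (proj_ran_perp hP (a2P n)).
by rewrite (iter_fix _ (lin0 (unitary_linear hU))) addr0 iterK //; apply: (unitaryKV hU).
Qed.

Lemma toE2_ofE12 n : toE2 (ofE12 a1 a2) n = a2 n.
Proof.
rewrite /toE2 /ofE12 (linD (perp_linear hP)) (iter_commute perpUs) (iter_commute perpU).
rewrite (perp_ran hP (a1P n)) (perp_ran_perp hP (a2P n)).
by rewrite (iter_fix _ (lin0 (unitary_adj_linear hU))) add0r iterK //; apply: (unitaryK hU).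
Qed.

Lemma sq_summable_ofE12 : sq_summable a1 -> sq_summable a2 -> sq_summable (ofE12 a1 a2).
Proof.
move=> [l1 s1] [l2 s2]; exists (l1 + l2).
apply: eq_series_to (series_toD s1 s2) => n.
by rewrite [RHS](ip_toE12 (ofE12 a1 a2)) toE1_ofE12 toE2_ofE12.
Qed.

End OfE12.

Lemma toE1_Mphi1 a n : toE1 (Mphi1 P Us a) n = shift (toE1 a) n.
Proof.
rewrite /toE1 /Mphi1 PUs (linD (proj_linear hP)) (proj_perp hP) (proj_idem hP) add0r.
case: n => [|n] /=; first by rewrite (lin0 (proj_linear hP)) (lin0 (unitary_adj_linear hU)).
by rewrite -iterS iterSr (unitaryKV hU).
Qed.

Lemma toE2_Mphi1 a n : toE2 (Mphi1 P Us a) n = Us (toE2 a n).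
Proof.
rewrite /toE2 /Mphi1 perpUs (linD (perp_linear hP)) (perp_idem hP) (perp_proj hP) addr0.
by rewrite -iterSr iterS.
Qed.

Lemma toE1_Mphi2 a n : toE1 (Mphi2 P U a) n = U (toE1 a n).
Proof.
rewrite /toE1 /Mphi2 (linD (proj_linear hP)) (proj_idem hP) (proj_perp hP) addr0 PU.
by rewrite -iterSr iterS.
Qed.

Lemma toE2_Mphi2 a n : toE2 (Mphi2 P U a) n = shift (toE2 a) n.
Proof.
rewrite /toE2 /Mphi2 (linD (perp_linear hP)) (perp_proj hP) (perp_idem hP) add0r perpU.
case: n => [|n] /=; first by rewrite (lin0 (perp_linear hP)) (lin0 (unitary_linear hU)).
by rewrite -iterS iterSr (unitaryK hU).
Qed.

End CommutingSplit.

Definition const_coef (R : realType) (E : hilbertSpace R) (e : E) : nat -> E :=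
  fun n => if n is 0 then e else 0.

Section BCLModel.
Variables (R : realType) (H E Hu : hilbertSpace R).
Variables (V1 V1s V2 V2s : H -> H) (P U Us : E -> E) (W1 W2 : Hu -> Hu).
Variable Phi : H -> (nat -> E) * Hu.
Hypotheses (hV1 : hs_isometry V1 V1s) (hV2 : hs_isometry V2 V2s).
Hypotheses (hP : hs_projection P) (hU : hs_unitary U Us).
Hypotheses (hW1 : hs_linear W1) (hW2 : hs_linear W2).
Hypothesis Phi_lin : forall (c : R[i]) (x y : H),
  (forall n, (Phi (c *: x + y)).1 n = c *: (Phi x).1 n + (Phi y).1 n)
  /\ (Phi (c *: x + y)).2 = c *: (Phi x).2 + (Phi y).2.
Hypothesis Phi_ip : forall x y : H,
  series_to (fun n => << (Phi x).1 n, (Phi y).1 n >>)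
            (<< x, y >> - << (Phi x).2, (Phi y).2 >>).
Hypothesis Phi_onto : forall (a : nat -> E) (k : Hu), sq_summable a ->
  exists x : H, (forall n, (Phi x).1 n = a n) /\ (Phi x).2 = k.
Hypothesis Phi_V : forall x : H,
  (forall n, (Phi (V1 x)).1 n = Mphi1 P Us (Phi x).1 n) /\
  (Phi (V1 x)).2 = W1 (Phi x).2 /\
  (forall n, (Phi (V2 x)).1 n = Mphi2 P U (Phi x).1 n) /\
  (Phi (V2 x)).2 = W2 (Phi x).2.

Let P0 : P 0 = 0 := lin0 (proj_linear hP).
Let perp0 : perp P 0 = 0 := lin0 (perp_linear hP).
Let U0 : U 0 = 0 := lin0 (unitary_linear hU).
Let Us0 : Us 0 = 0 := lin0 (unitary_adj_linear hU).

Lemma Phi1_linear n : hs_linear (fun x => (Phi x).1 n).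
Proof. by move=> c x y /=; case: (Phi_lin c x y) => ->. Qed.

Lemma Phi2_linear : hs_linear (fun x => (Phi x).2).
Proof. by move=> c x y /=; case: (Phi_lin c x y). Qed.

Lemma Phi_inj x y :
  (forall n, (Phi x).1 n = (Phi y).1 n) -> (Phi x).2 = (Phi y).2 -> x = y.
Proof.
move=> h1 h2; apply/eqP; rewrite -subr_eq0; apply/eqP/hs_ip_eq0.
have d1 n : (Phi (x - y)).1 n = 0 by rewrite (linB (Phi1_linear n)) /= h1 subrr.
have d2 : (Phi (x - y)).2 = 0 by rewrite (linB Phi2_linear) /= h2 subrr.
have f0 n : << (Phi (x - y)).1 n, (Phi (x - y)).1 n >> = 0 by rewrite d1 ip0l.
have := series_to_firstE (fun n _ => f0 n) (Phi_ip (x - y) (x - y)).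
by rewrite /= f0 d2 ip0l subr0.
Qed.

Definition is_const x e := (forall n, (Phi x).1 n = const_coef e n) /\ (Phi x).2 = 0.

Lemma is_const_exists e : exists x, is_const x e.
Proof.
apply: Phi_onto; exists << e, e >>.
by apply: series_to_first => -[|n] // _; rewrite ip0l.
Qed.

Lemma is_const0 : is_const 0 0.
Proof.
split=> [n|]; last exact: (lin0 Phi2_linear).
by rewrite (lin0 (Phi1_linear n)); case: n.
Qed.

Lemma is_constD x y a b : is_const x a -> is_const y b -> is_const (x + y) (a + b).
Proof.
move=> [xa x0] [yb y0]; split=> [n|].
  by rewrite (linD (Phi1_linear n)) /= xa yb; case: n => [|n] /=; rewrite ?addr0.
by rewrite (linD Phi2_linear) /= x0 y0 addr0.
Qed.

Lemma is_const_inj x y e : is_const x e -> is_const y e -> x = y.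
Proof. by move=> [xe x0] [ye y0]; apply: Phi_inj => [n|]; rewrite ?xe ?ye ?x0 ?y0. Qed.

Lemma is_const_uniq x a b : is_const x a -> is_const x b -> a = b.
Proof. by move=> [xa _] [xb _]; have := xa 0%N; rewrite xb. Qed.

Lemma ip_is_const x w e : is_const w e -> << x, w >> = << (Phi x).1 0%N, e >>.
Proof.
move=> [we w0].
have f0 n : (0 < n)%N -> << (Phi x).1 n, (Phi w).1 n >> = 0.
  by case: n => // n _; rewrite we ip0r.
by have := series_to_firstE f0 (Phi_ip x w); rewrite w0 ip0r subr0 we.
Qed.

Lemma V1_is_const z b : is_const z b -> P b = 0 -> is_const (V1 z) (Us b).
Proof.
move=> [zb z0] Pb; have [V1z1 [V1z2 _]] := Phi_V z.
split=> [n|]; last by rewrite V1z2 z0 (lin0 hW1).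
rewrite V1z1 /Mphi1 /perp; case: n => [|[|n]] /=; rewrite !zb /=.
- by rewrite Pb P0 !subr0 addr0.
- by rewrite P0 Pb subr0 addr0 Us0.
- by rewrite P0 subr0 addr0 Us0.
Qed.

Lemma V2_is_const z b : is_const z b -> perp P (U b) = 0 -> is_const (V2 z) (U b).
Proof.
move=> [zb z0] Ub; have [_ [_ [V2z1 V2z2]]] := Phi_V z.
split=> [n|]; last by rewrite V2z2 z0 (lin0 hW2).
rewrite V2z1 /Mphi2; case: n => [|[|n]] /=; rewrite !zb /=.
- by rewrite U0 perp0 addr0 -[RHS](proj_add_perp P) Ub addr0.
- by rewrite U0 P0 Ub addr0.
- by rewrite U0 P0 perp0 addr0.
Qed.

Lemma V1s_is_const x e : is_const x e -> is_const (V1s x) (perp P (U e)).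
Proof.
move=> xe; have [z hz] := is_const_exists (perp P (U e)).
have [w hw] := is_const_exists (Us (P (U e))).
(* e = U^* P^perp U e + U^* P U e: the first summand is in ran M_phi1, the
   second is orthogonal to it. *)
have x_eq : x = V1 z + w.
  have := is_constD (V1_is_const hz (proj_perp hP _)) hw.
  rewrite -(linD (unitary_adj_linear hU)) [perp P _ + _]addrC (proj_add_perp P) (unitaryK hU).
  exact: is_const_inj.
suff -> : V1s x = z by [].
apply: (isometry_adjoint_decomp hV1 x_eq) => u; have [V1u _] := Phi_V u.
by rewrite (ip_is_const _ hw) V1u /Mphi1 /= P0 addr0 (unitary_adj_ip hU) ip_perp_proj.
Qed.

Lemma V2_is_const_proj z e : is_const z (Us (P e)) -> is_const (V2 z) (P e).
Proof.
by move/V2_is_const; rewrite (unitaryKV hU) (perp_proj hP); apply.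
Qed.

Lemma V2s_is_const x e : is_const x e -> is_const (V2s x) (Us (P e)).
Proof.
move=> xe; have [z hz] := is_const_exists (Us (P e)).
have [w hw] := is_const_exists (perp P e).
have x_eq : x = V2 z + w.
  by have := is_constD (V2_is_const_proj hz) hw; rewrite (proj_add_perp P); apply: is_const_inj.
suff -> : V2s x = z by [].
apply: (isometry_adjoint_decomp hV2 x_eq) => u; have [_ [_ [V2u _]]] := Phi_V u.
by rewrite (ip_is_const _ hw) V2u /Mphi2 /= U0 perp0 addr0 ip_proj_perp.
Qed.

Lemma defect_zero_proj_commute :
  defect_zero V1 V1s V2 V2s -> forall e, P (U e) = U (P e).
Proof.
move=> hdef e; have [x xe] := is_const_exists e.
have x1 := V1s_is_const xe.
have x11 := V1_is_const x1 (proj_perp hP _).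
have x22 := V2_is_const_proj (V2s_is_const xe).
have x21 : V2s (V1s x) = 0.
  apply: (is_const_inj (V2s_is_const x1)).
  by rewrite (proj_perp hP) Us0; exact: is_const0.
have [[V1lin _ _] [V2lin _ _]] := (hV1, hV2).
have := hdef x; rewrite x21 (lin0 V2lin) (lin0 V1lin) addr0.
move=> /subr0_eq/eqP; rewrite subr_eq => /eqP x_eq.
have := is_constD x22 x11; rewrite -x_eq => /(is_const_uniq xe).
rewrite /perp (linB (unitary_adj_linear hU)) (unitaryK hU) => e_eq.
rewrite -[P (U e)](unitaryKV hU); congr U.
apply: (@addrI _ (e - Us (P (U e)))); rewrite [RHS]addrC -e_eq.
by rewrite subrK.
Qed.

Lemma series_to_proj x y :
  exists s, series_to (fun n => << P ((Phi x).1 n), P ((Phi y).1 n) >>) s.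
Proof.
have sqPx : sq_summable (fun n => P ((Phi x).1 n)).
  by apply: (series_to_comparison _ (Phi_ip x x)) => n; rewrite hs_ip_ge0 ip_proj_le.
have [x1 [x1P _]] := Phi_onto 0 sqPx.
exists (<< x1, y >> - << (Phi x1).2, (Phi y).2 >>).
by apply: eq_series_to (Phi_ip x1 y) => n; rewrite x1P ip_projr.
Qed.

Lemma Phi_split_ip x y : exists s1 s2,
  [/\ series_to (fun n => << toE1 P U (Phi x).1 n, toE1 P U (Phi y).1 n >>) s1,
      series_to (fun n => << toE2 P Us (Phi x).1 n, toE2 P Us (Phi y).1 n >>) s2
    & << x, y >> = s1 + s2 + << (Phi x).2, (Phi y).2 >>].
Proof.
have [s1 hs1] := series_to_proj x y.
exists s1, (<< x, y >> - << (Phi x).2, (Phi y).2 >> - s1); split.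
- by apply: eq_series_to hs1 => n; rewrite (ip_toE1 P hU).
- apply: eq_series_to (series_toB (Phi_ip x y) hs1) => n.
  by rewrite (ip_toE12 hP hU (Phi x).1) (ip_toE1 P hU) addrC addKr.
- by ring.
Qed.

Hypothesis PU : forall e, P (U e) = U (P e).


Lemma Phi_split_onto a1 a2 k :
  (forall n, ran P (a1 n)) -> (forall n, ran (perp P) (a2 n)) ->
  sq_summable a1 -> sq_summable a2 ->
  exists x, [/\ forall n, toE1 P U (Phi x).1 n = a1 n,
                forall n, toE2 P Us (Phi x).1 n = a2 n & (Phi x).2 = k].
Proof.
move=> a1P a2P sq1 sq2.
have [x [xa xk]] := Phi_onto k (sq_summable_ofE12 hP hU PU a1P a2P sq1 sq2).
exists x; split=> // n; rewrite /toE1 /toE2 xa.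
- by have := toE1_ofE12 hP hU PU a1P a2P n.
- by have := toE2_ofE12 hP hU PU a1P a2P n.
Qed.


Lemma Phi_split_V x :
  [/\ forall n, toE1 P U (Phi (V1 x)).1 n = shift (toE1 P U (Phi x).1) n,
      forall n, toE2 P Us (Phi (V1 x)).1 n = Us (toE2 P Us (Phi x).1 n)
    & (Phi (V1 x)).2 = W1 (Phi x).2] /\
  [/\ forall n, toE1 P U (Phi (V2 x)).1 n = U (toE1 P U (Phi x).1 n),
      forall n, toE2 P Us (Phi (V2 x)).1 n = shift (toE2 P Us (Phi x).1) n
    & (Phi (V2 x)).2 = W2 (Phi x).2].
Proof.
have [V1x1 [V1x2 [V2x1 V2x2]]] := Phi_V x.
split; split=> // n; rewrite /toE1 /toE2 ?V1x1 ?V2x1.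
- exact: toE1_Mphi1 hP hU PU _ n.
- exact: toE2_Mphi1 hP hU PU _ n.
- exact: toE1_Mphi2 hP PU _ n.
- exact: toE2_Mphi2 hP hU PU _ n.
Qed.

End BCLModel.

Theorem theorem2p4 (R : realType) (H : hilbertSpace R) (V1 V1s V2 V2s : H -> H)
  (hV1 : hs_isometry V1 V1s) (hV2 : hs_isometry V2 V2s)
  (hcomm : commute_op V1 V2) (hdef : defect_zero V1 V1s V2 V2s)
  (E : hilbertSpace R) (P U Us : E -> E)
  (hBCL : is_BCL_triple V1 V2 P U Us) :
  (* E1 = ran P and E2 = ran P^perp reduce U, i.e. U = diag(U1, U2) *)
  (reducing U Us (ran P) /\ reducing U Us (ran (perp P))) /\
  (* H = (H^2 (x) E1) (+) (H^2 (x) E2) (+) K, with V1, V2 block diagonal *)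
  exists (K : hilbertSpace R) (W1 W1s W2 W2s : K -> K)
         (Phi : H -> (nat -> E) * (nat -> E) * K),
    [/\ hs_unitary W1 W1s, hs_unitary W2 W2s, commute_op W1 W2 &
    (* Phi maps into (H^2 (x) E1) (+) (H^2 (x) E2) (+) K *)
    (forall (x : H) (n : nat), ran P ((Phi x).1.1 n) /\ ran (perp P) ((Phi x).1.2 n)) /\
    (* Phi is linear *)
    (forall (c : R[i]) (x y : H),
        [/\ forall n, (Phi (c *: x + y)).1.1 n = c *: (Phi x).1.1 n + (Phi y).1.1 n,
            forall n, (Phi (c *: x + y)).1.2 n = c *: (Phi x).1.2 n + (Phi y).1.2 n
          & (Phi (c *: x + y)).2 = c *: (Phi x).2 + (Phi y).2]) /\
    (* Phi preserves inner products *)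
    (forall x y : H, exists s1 s2 : R[i],
        [/\ series_to (fun n => << (Phi x).1.1 n, (Phi y).1.1 n >>) s1,
            series_to (fun n => << (Phi x).1.2 n, (Phi y).1.2 n >>) s2
          & << x, y >> = s1 + s2 + << (Phi x).2, (Phi y).2 >>]) /\
    (* Phi is onto (H^2 (x) E1) (+) (H^2 (x) E2) (+) K *)
    (forall (a1 a2 : nat -> E) (k : K),
        (forall n, ran P (a1 n)) -> (forall n, ran (perp P) (a2 n)) ->
        sq_summable a1 -> sq_summable a2 ->
        exists x : H, [/\ forall n, (Phi x).1.1 n = a1 n,
                          forall n, (Phi x).1.2 n = a2 n & (Phi x).2 = k]) /\
    (* Phi V1 = (M_z (x) I_E1  (+)  I (x) U2^*  (+)  W1) Phi,
       Phi V2 = (I (x) U1  (+)  M_z (x) I_E2  (+)  W2) Phi,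
       where U1 = U|E1, U2 = U|E2 (so U2^* = U^*|E2) *)
    (forall x : H,
        [/\ forall n, (Phi (V1 x)).1.1 n = shift (Phi x).1.1 n,
            forall n, (Phi (V1 x)).1.2 n = Us ((Phi x).1.2 n)
          & (Phi (V1 x)).2 = W1 (Phi x).2] /\
        [/\ forall n, (Phi (V2 x)).1.1 n = U ((Phi x).1.1 n),
            forall n, (Phi (V2 x)).1.2 n = shift (Phi x).1.2 n
          & (Phi (V2 x)).2 = W2 (Phi x).2])].
Proof.
case: hBCL => hP hU [K [W1 [W1s [W2 [W2s [Phi [hW1 hW2 hW12 [Phi_lin [Phi_ip [Phi_onto Phi_V]]]]]]]]]].
have PU := defect_zero_proj_commute hV1 hV2 hP hU (unitary_linear hW1)
  (unitary_linear hW2) Phi_lin Phi_ip Phi_onto Phi_V hdef.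
split; first exact: commute_reducing_ran.
exists K, W1, W1s, W2, W2s, (fun x => (toE1 P U (Phi x).1, toE2 P Us (Phi x).1, (Phi x).2)).
split=> //=; split; [|split; [|split; [|split]]].
- by move=> x n; split; [exact: toE1_ran PU _ _ | exact: toE2_ran hU PU _ _].
- move=> c x y; have [lin1 lin2] := Phi_lin c x y.
  split=> // n; rewrite /toE1 /toE2 lin1.
    by rewrite (proj_linear hP) (iter_linear _ (unitary_linear hU)).
  by rewrite (perp_linear hP) (iter_linear _ (unitary_adj_linear hU)).
- exact: Phi_split_ip hP hU Phi_ip Phi_onto.
- exact: Phi_split_onto hP hU Phi_onto PU.
- exact: Phi_split_V hP hU Phi_V PU.
Qed.
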